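(* Let $G$ be a group and let $\rho$ and $\rho'$ be finite-dimensional representations of $G$ over a field $k$ with equal determinant. Suppose there exists a normal subgroup $H$ of $G$ such that $\rho|_H$ and $\rho'|_H$ are absolutely irreducible and isomorphic. Then there exists a finite index subgroup $G'$ of $G$ such that $\rho|_{G'}$ and $\rho'|_{G'}$ are isomorphic. *)

From HB Require Import structures.
From mathcomp Require Import all_boot all_order all_algebra.


Set Implicit Arguments.
Unset Strict Implicit.
Unset Printing Implicit Defensive.

Import GRing.Theory.
Local Open Scope ring_scope.

(* G is an arbitrary (possibly infinite) group: MathComp's groupType. *)

Definition is_rep (G : groupType) (k : fieldType) (n : nat)
  (rho : G -> 'M[k]_n) : Prop :=
  rho 1%g = 1%:M /\ forall x y : G, rho (x * y)%g = rho x *m rho y.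

Definition is_subgroup (G : groupType) (H : {pred G}) : Prop :=
  (1%g \in H) /\ (forall x y, x \in H -> y \in H -> (x * y)%g \in H)
  /\ (forall x, x \in H -> (x^-1)%g \in H).

Definition is_normal_subgroup (G : groupType) (H : {pred G}) : Prop :=
  is_subgroup H /\ forall x h : G, h \in H -> (x^-1 * h * x)%g \in H.

Definition finite_index (G : groupType) (H : {pred G}) : Prop :=
  exists s : seq G, forall g : G, exists2 x, x \in s & (x^-1 * g)%g \in H.

(* The family of matrices sigma restricted to H acts irreducibly on L^n
   (row vectors, matrices acting on the right): n > 0 and the only
   H-invariant subspaces are 0 and the whole space. *)
Definition irreducible_on (G : groupType) (L : fieldType) (n : nat)
  (H : {pred G}) (sigma : G -> 'M[L]_n) : Prop :=
  (0 < n)%N /\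
  forall U : 'M[L]_n,
    (forall h, h \in H -> (U *m sigma h <= U)%MS) ->
    U = 0 \/ row_full U.

(* rho restricted to H is absolutely irreducible: it stays irreducible after
   extension of scalars along any field extension k -> L (equivalently, over
   an algebraic closure of k). *)
Definition abs_irreducible_on (G : groupType) (k : fieldType) (n : nat)
  (H : {pred G}) (rho : G -> 'M[k]_n) : Prop :=
  forall (L : fieldType) (f : {rmorphism k -> L}),
    irreducible_on H (fun g => map_mx f (rho g)).

Definition iso_on (G : groupType) (k : fieldType) (n : nat)
  (H : {pred G}) (rho rho' : G -> 'M[k]_n) : Prop :=
  exists2 P : 'M[k]_n, P \in unitmx &
    forall h, h \in H -> P *m rho h = rho' h *m P.

From HB Require Import structures.
From mathcomp Require Import all_boot all_order all_algebra all_field.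
From Stdlib Require Import Classical ClassicalEpsilon.

(* By Schur's lemma (made available by absolute irreducibility: an eigenvalue
   exists after extending scalars), an intertwiner P from rho|_H to rho'|_H is
   unique up to a scalar. As H is normal, rho'(g)^-1 P rho(g) is again such an
   intertwiner, hence P rho(g) = c(g) rho'(g) P for a character c : G -> k^*.
   Taking determinants gives c(g)^n = 1, so c takes finitely many values and
   its kernel is a subgroup of finite index on which P intertwines rho and
   rho'. *)

Set Implicit Arguments.
Unset Strict Implicit.
Unset Printing Implicit Defensive.

Import GRing.Theory.
Local Open Scope ring_scope.

Lemma exists_irreducible_dvdp (F : fieldType) (p : {poly F}) :
  (1 < size p)%N -> exists2 q : {poly F}, irreducible_poly q & q %| p.
Proof.
have [d] := ubnP (size p); elim: d p => // d IHd p /ltnSE le_p_d p_gt1.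
have [irr_p | red_p] := classic (irreducible_poly p); first by exists p.
have [q [q_neq1 q_dvd_p q_neqp]] :
    exists q : {poly F}, [/\ size q != 1%N, q %| p & ~~ (q %= p)].
  apply: NNPP => no_q; apply: red_p; split=> // q q_neq1 q_dvd_p.
  by apply: contraT => q_neqp; case: no_q; exists q.
have p_neq0 : p != 0 by rewrite -size_poly_eq0 -lt0n (ltn_trans _ p_gt1).
have q_gt1 : (1 < size q)%N.
  rewrite ltn_neqAle eq_sym q_neq1 lt0n size_poly_eq0.
  by apply: contraTneq q_dvd_p => ->; rewrite dvd0p.
have lt_q_p : (size q < size p)%N.
  by rewrite ltn_neqAle dvdp_size_eqp // q_neqp dvdp_leq.
have [r irr_r r_dvd_q] := IHd q (leq_trans lt_q_p le_p_d) q_gt1.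
by exists r => //; apply: dvdp_trans r_dvd_q q_dvd_p.
Qed.

Lemma roots_finite (R : idomainType) (p : {poly R}) :
  p != 0 -> exists r : seq R, forall z, root p z -> z \in r.
Proof.
have [d] := ubnP (size p); elim: d p => // d IHd p /ltnSE le_p_d p_neq0.
have [[z0 root_z0] | no_root] := classic (exists z0, root p z0); last first.
  by exists [::] => z root_z; case: no_root; exists z.
have /factor_theorem[q def_p] := root_z0.
have q_neq0 : q != 0.
  by apply: contraNneq p_neq0; rewrite def_p => ->; rewrite mul0r.
have lt_q_p : (size q < size p)%N.
  by rewrite def_p size_Mmonic ?monicXsubC // size_XsubC addn2.
have [r root_r] := IHd q (leq_trans lt_q_p le_p_d) q_neq0.
exists (z0 :: r) => z; rewrite def_p rootM root_XsubC in_cons.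
by case/orP=> [/root_r r_z | ->]; rewrite ?r_z ?orbT.
Qed.

Lemma eigenvalue_in_extension (F : fieldType) n (A : 'M[F]_n.+1) :
  exists (L : fieldType) (f : {rmorphism F -> L}) (z : L),
    eigenvalue (map_mx f A) z.
Proof.
have [q irr_q q_dvd] :=
  @exists_irreducible_dvdp _ (char_poly A) ltac:(by rewrite size_char_poly).
have [L _ [z qz _]] := irredp_FAdjoin irr_q.
exists L, (in_alg L), z.
rewrite eigenvalue_root_char -map_char_poly.
have [r ->] := dvdpP _ _ q_dvd.
by rewrite rmorphM rootM qz orbT.
Qed.

Lemma abs_irreducible_dim_gt0 (G : groupType) (k : fieldType) n (H : {pred G})
    (sigma : G -> 'M[k]_n) :
  abs_irreducible_on H sigma -> (0 < n)%N.
Proof. by case/(_ k idfun). Qed.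

Lemma abs_irreducible_commutant_scalar (G : groupType) (k : fieldType) n
    (H : {pred G}) (sigma : G -> 'M[k]_n) (A : 'M[k]_n) :
    abs_irreducible_on H sigma ->
    (forall h, h \in H -> comm_mx A (sigma h)) ->
  exists a, A = a%:M.
Proof.
case: n sigma A => [|n] sigma A airr cA; first by exists 0; apply/matrixP=> [[]].
have [L [f [z ev]]] := eigenvalue_in_extension A.
have [_ irr] := airr L f.
have [E0 | E_full] : eigenspace (map_mx f A) z = 0 \/
                     row_full (eigenspace (map_mx f A) z).
- apply: irr => h hH; apply: comm_mx_stable_eigenspace.
  by rewrite /comm_mx -!map_mxM cA.
- by move: ev; rewrite /eigenvalue E0 eqxx.
have Af_scalar : map_mx f A = z%:M.
  apply/eqP; rewrite -subr_eq0 -(mul1mx (_ - _)) -sub_kermx.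
  exact: submx_full.
have z_entry : z = f (A ord0 ord0).
  have := congr1 (fun M : 'M_n.+1 => M ord0 ord0) Af_scalar.
  by rewrite !mxE eqxx mulr1n.
exists (A ord0 ord0); apply: (@map_mx_inj _ _ f).
by rewrite Af_scalar map_scalar_mx z_entry.
Qed.

Definition intertwines (G : groupType) (k : fieldType) n (H : {pred G})
    (rho rho' : G -> 'M[k]_n) (P : 'M[k]_n) :=
  forall h, h \in H -> P *m rho h = rho' h *m P.

Lemma intertwiner_unique (G : groupType) (k : fieldType) n (H : {pred G})
    (rho rho' : G -> 'M[k]_n) (P Q : 'M[k]_n) :
    abs_irreducible_on H rho -> P \in unitmx ->
    intertwines H rho rho' P -> intertwines H rho rho' Q ->
  exists d, Q = d *: P.
Proof.
move=> airr P_unit PH QH.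
have [d Ed] : exists d, invmx P *m Q = d%:M.
  apply: abs_irreducible_commutant_scalar airr _ => h hH.
  have invPH : invmx P *m rho' h = rho h *m invmx P.
    by rewrite -[rho h](mulKmx P_unit) PH // -!mulmxA mulmxV // mulmx1.
  by rewrite /comm_mx -mulmxA QH // !mulmxA invPH.
by exists d; rewrite -[Q](mulKVmx P_unit) Ed mul_mx_scalar.
Qed.

Lemma rep_mulmxV (G : groupType) (k : fieldType) n (rho : G -> 'M[k]_n) :
  is_rep rho -> forall g, rho g *m rho (g^-1)%g = 1%:M.
Proof. by case=> rho1 rhoM g; rewrite -rhoM mulgV rho1. Qed.

Lemma rep_unitmx (G : groupType) (k : fieldType) n (rho : G -> 'M[k]_n) :
  is_rep rho -> forall g, rho g \in unitmx.
Proof. by move=> rho_rep g; case: (mulmx1_unit (rep_mulmxV rho_rep g)). Qed.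

Lemma finite_index_of_fibres (G : groupType) (T : eqType) (c : G -> T)
    (r : seq T) (K : {pred G}) :
    (forall g, c g \in r) -> (forall x g, c x = c g -> (x^-1 * g)%g \in K) ->
  finite_index K.
Proof.
move=> c_in_r c_fibre.
pose pick_fibre z := epsilon (inhabits 1%g) (fun x : G => c x = z).
exists (map pick_fibre r) => g; exists (pick_fibre (c g)); first exact: map_f.
by apply/c_fibre/(epsilon_spec (inhabits 1%g) (fun x => c x = c g)); exists g.
Qed.

Section TwistCharacter.

Variables (G : groupType) (k : fieldType) (n : nat) (H : {pred G}).
Variables (rho rho' : G -> 'M[k]_n) (P : 'M[k]_n).
Hypotheses (rho_rep : is_rep rho) (rho'_rep : is_rep rho').
Hypotheses (H_normal : is_normal_subgroup H) (rho_airr : abs_irreducible_on H rho).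
Hypotheses (P_unit : P \in unitmx) (P_intertwines : intertwines H rho rho' P).

Lemma intertwines_conj g : intertwines H rho rho' (rho' (g^-1)%g *m P *m rho g).
Proof.
have [_ rhoM] := rho_rep; have [_ rho'M] := rho'_rep; have [_ H_conj] := H_normal.
move=> h hH; pose h' := ((g^-1)^-1 * h * g^-1)%g.
have h'H : h' \in H by apply: H_conj.
have gh : (g * h = h' * g)%g by rewrite /h' invgK mulgVK.
have g'h' : (g^-1 * h' = h * g^-1)%g by rewrite /h' invgK -!mulgA mulKg.
rewrite -!mulmxA -rhoM gh rhoM !mulmxA -(mulmxA _ P) P_intertwines //.
by rewrite mulmxA -rho'M g'h' rho'M.
Qed.

Lemma intertwiner_twisted g : exists d, P *m rho g == d *: (rho' g *m P).
Proof.
have [d Ed] := intertwiner_unique rho_airr P_unit P_intertwines (intertwines_conj g).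
by exists d; apply/eqP; rewrite scalemxAr -Ed !mulmxA rep_mulmxV // mul1mx.
Qed.

Definition twist g : k := xchoose (intertwiner_twisted g).

Lemma twistE g : P *m rho g = twist g *: (rho' g *m P).
Proof. exact/eqP/(xchooseP (intertwiner_twisted g)). Qed.

Lemma twist_unique g d : P *m rho g = d *: (rho' g *m P) -> twist g = d.
Proof.
have n_gt0 := abs_irreducible_dim_gt0 rho_airr; pose i0 := Ordinal n_gt0.
have M_unit : rho' g *m P \in unitmx by rewrite unitmx_mul rep_unitmx.
rewrite twistE => /(congr1 (mulmx^~ (invmx (rho' g *m P)))).
rewrite -!scalemxAl mulmxV // !scalemx1 => /matrixP/(_ i0 i0).
by rewrite !mxE eqxx !mulr1n.
Qed.

Lemma twist1 : twist 1%g = 1.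
Proof.
have [rho1 _] := rho_rep; have [rho'1 _] := rho'_rep.
by apply: twist_unique; rewrite rho1 rho'1 mulmx1 mul1mx scale1r.
Qed.

Lemma twistM x y : twist (x * y)%g = twist x * twist y.
Proof.
have [_ rhoM] := rho_rep; have [_ rho'M] := rho'_rep.
apply: twist_unique; rewrite rhoM mulmxA twistE -scalemxAl -mulmxA twistE.
by rewrite -scalemxAr scalerA mulmxA -rho'M.
Qed.

Lemma twist_expn (det_eq : forall g, \det (rho g) = \det (rho' g)) g :
  twist g ^+ n = 1.
Proof.
have d_unit : \det (rho' g *m P) \is a GRing.unit.
  by rewrite -unitmxE unitmx_mul rep_unitmx.
apply: (mulIr d_unit); rewrite mul1r -detZ -twistE !det_mulmx det_eq.
by rewrite mulrC.
Qed.

Definition twist_ker : {pred G} := [pred g | twist g == 1].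

Lemma twist_ker_subgroup : is_subgroup twist_ker.
Proof.
split; first by rewrite inE twist1.
split=> [x y | x]; rewrite !inE.
  by rewrite twistM => /eqP-> /eqP->; rewrite mulr1.
by move=> /eqP tx1; have := twistM x^-1 x; rewrite mulVg twist1 tx1 mulr1 => <-.
Qed.

Lemma twist_ker_finite_index (det_eq : forall g, \det (rho g) = \det (rho' g)) :
  finite_index twist_ker.
Proof.
have n_gt0 := abs_irreducible_dim_gt0 rho_airr.
have [r root_r] := roots_finite (monic_neq0 (monicXnsubC (1 : k) n_gt0)).
apply: (@finite_index_of_fibres _ _ twist r) => [g | x g twist_xg].
  by apply: root_r; rewrite rootE !hornerE twist_expn // subrr.
by rewrite inE twistM -twist_xg -twistM mulVg twist1.
Qed.

Lemma twist_ker_intertwines : intertwines twist_ker rho rho' P.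
Proof.
by move=> g; rewrite inE => /eqP twist_g1; rewrite twistE twist_g1 scale1r.
Qed.

End TwistCharacter.

Unset Implicit Arguments.

Theorem lemma2p6 (G : groupType) (k : fieldType) (n : nat)
  (rho rho' : G -> 'M[k]_n) :
  is_rep rho -> is_rep rho' ->
  (forall g : G, \det (rho g) = \det (rho' g)) ->
  (exists H : {pred G},
     [/\ is_normal_subgroup H, abs_irreducible_on H rho,
         abs_irreducible_on H rho' & iso_on H rho rho']) ->
  exists G' : {pred G},
    [/\ is_subgroup G', finite_index G' & iso_on G' rho rho'].
Proof.
(* Absolute irreducibility of rho' follows from that of rho and the
   isomorphism on H. *)
move=> rho_rep rho'_rep det_eq [H [H_normal rho_airr _ [P P_unit P_intertwines]]].
exists (twist_ker rho_rep rho'_rep H_normal rho_airr P_unit P_intertwines); split.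
- exact: twist_ker_subgroup.
- exact: twist_ker_finite_index.
- by exists P; last exact: twist_ker_intertwines.
Qed.
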